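(* For any $\mathrm{LP}^{\mathrm{MLN}}$ program $\Pi$, the map \[ \phi(I)=I\cup\{\mathtt{unsat}(i,w_i,\mathbf c) : w_i:\mathit{Head}_i(\mathbf c)\leftarrow\mathit{Body}_i(\mathbf c)\in Gr(\Pi),\ I\not\models \mathit{Body}_i(\mathbf c)\rightarrow \mathit{Head}_i(\mathbf c)\} \] is a one-to-one correspondence between $\mathrm{SM}[\Pi]$ and the set of stable models of $\mathsf{lpmln2asp^{pnt}}(\Pi)$. Furthermore, for every $I\in\mathrm{SM}[\Pi]$, \[ W^{\rm pnt}_\Pi(I)=\exp\Big(-\sum_{\mathtt{unsat}(i,w_i,\mathbf c)\in\phi(I)} w_i\Big). \] Also, $\phi$ restricts to a one-to-one correspondence between the most probable stable models of $\Pi$ and the optimal stable models of $\mathsf{lpmln2asp^{pnt}}(\Pi)$.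
   Context: An $\mathrm{LP}^{\mathrm{MLN}}$ program is a finite set of weighted rules $w_i:\mathit{Head}_i(\mathbf x)\leftarrow \mathit{Body}_i(\mathbf x)$, indexed by $i$, where $\mathbf x$ is the list of global variables, $\mathit{Head}_i$ is a possibly empty disjunction of atoms $l_1;\dots;l_n$, $\mathit{Body}_i$ a conjunction of literals, and $w_i$ a real number or the symbol $\alpha$ (infinite weight). The Herbrand universe is finite; $Gr(\Pi)$ replaces global variables by all tuples $\mathbf c$. For ground $\Pi$ and interpretation $I$: $\overline{\Pi}$ drops weights, $\Pi_I$ is the set of rules satisfied by $I$, $\mathrm{SM}[\Pi]=\{I: I\text{ stable model of }\overline{\Pi_I}\}$; $W^{\rm pnt}_\Pi(I)=\exp(-\sum_{w:R\in\Pi,\ I\not\models R}w)$ if $I\in\mathrm{SM}[\Pi]$ and $0$ otherwise; $W_\Pi(I)=\exp(\sum_{w:R\in\Pi_I}w)$ if $I\in\mathrm{SM}[\Pi]$, else $0$; $P_\Pi(I)=\lim_{\alpha\to\infty}W_\Pi(I)/\sum_{J\in\mathrm{SM}[\Pi]}W_\Pi(J)$; most probable stable models maximize $P_\Pi$. Weak constraints: $:\sim F\ [\mathit{Weight}@\mathit{Level}]$ with $F$ a conjunction of literals, real weight, nonnegative integer level (optionally with a tuple of terms distinguishing instances). For $\Pi_1\cup\Pi_2$ ($\Pi_1$ without weak constraints, $\Pi_2$ ground weak constraints), stable models are those of $\Pi_1$; the penalty of $I$ at level $l$ is $\sum_{:\sim F[w@l]\in\Pi_2,\ I\models F}w$;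 $I$ is dominated by $I'$ if at some level $l$ the penalty of $I'$ is strictly smaller and they agree at all levels $k>l$; optimal stable models are those not dominated. $\mathsf{lpmln2asp^{pnt}}(\Pi)$ replaces each rule $w_i:\mathit{Head}_i(\mathbf x)\leftarrow\mathit{Body}_i(\mathbf x)$ by $\mathtt{unsat}(i,w_i,\mathbf x)\leftarrow \mathit{Body}_i(\mathbf x),\ \mathtt{not}\ \mathit{Head}_i(\mathbf x)$; $\mathit{Head}_i(\mathbf x)\leftarrow \mathit{Body}_i(\mathbf x),\ \mathtt{not}\ \mathtt{unsat}(i,w_i,\mathbf x)$; $:\sim \mathtt{unsat}(i,w_i,\mathbf x).\ [w'_i@l, i,\mathbf x]$, where $w'_i=1,\ l=1$ if $w_i=\alpha$ and $w'_i=w_i,\ l=0$ otherwise; $\mathtt{not}\ \mathit{Head}_i$ for $\mathit{Head}_i=l_1;\dots;l_n$ stands for $\mathtt{not}\ l_1,\dots,\mathtt{not}\ l_n$; $\mathtt{unsat}$ is a fresh predicate. In the weight formula hard weights are kept as the symbol $\alpha$. *)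

From mathcomp Require Import all_boot.
From Stdlib Require Import Reals.

Set Implicit Arguments.
Unset Strict Implicit.
Unset Printing Implicit Defensive.

(* A ground rule  l_1;...;l_n <- p_1,...,p_k, not q_1,...,not q_m.           *)
Record grule (T : Type) := GRule { ghead : seq T; gpos : seq T; gneg : seq T }.

Section GroundSemantics.
Variable T : finType.

Definition sat_body (I : {set T}) (r : grule T) : bool :=
  all (fun a => a \in I) (gpos r) && all (fun a => a \notin I) (gneg r).

Definition sat_rule (I : {set T}) (r : grule T) : bool :=
  sat_body I r ==> has (fun a => a \in I) (ghead r).

Definition is_model (P : seq (grule T)) (I : {set T}) : bool :=
  all (sat_rule I) P.

Definition reduct (P : seq (grule T)) (I : {set T}) : seq (grule T) :=
  [seq GRule (ghead r) (gpos r) [::] | r <- P & all (fun a => a \notin I) (gneg r)].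

Definition stable (P : seq (grule T)) (I : {set T}) : bool :=
  is_model (reduct P I) I &&
  [forall J : {set T}, (J \proper I) ==> ~~ is_model (reduct P I) J].

(* Ground weak constraints  :~ F [w@l]  with F a conjunction of literals. *)
Record wconstr := WC { wpos : seq T; wneg : seq T; wwt : R; wlvl : nat }.

Definition sumR (s : seq R) : R := foldr Rplus 0%R s.

Definition wc_sat (I : {set T}) (c : wconstr) : bool :=
  all (fun a => a \in I) (wpos c) && all (fun a => a \notin I) (wneg c).

Definition penalty (W : seq wconstr) (I : {set T}) (l : nat) : R :=
  sumR [seq wwt c | c <- W & (wlvl c == l) && wc_sat I c].

Definition dominated (W : seq wconstr) (I I' : {set T}) : Prop :=
  exists l : nat, (penalty W I' l < penalty W I l)%R /\
    forall k : nat, (l < k)%N -> penalty W I' k = penalty W I k.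

Definition optimal (P : seq (grule T)) (W : seq wconstr) (I : {set T}) : Prop :=
  stable P I /\ ~ (exists I' : {set T}, stable P I' /\ dominated W I I').

End GroundSemantics.

Inductive weight := Soft of R | Hard.   (* Hard = the symbol alpha *)

Definition wval (a : R) (w : weight) : R :=
  match w with Soft r => r | Hard => a end.

Section LPMLN.
(* C : the (finite) Herbrand universe; Pr : predicate symbols with arities *)
Variables (C Pr : finType) (ar : Pr -> nat).

Definition gatom : finType := {p : Pr & (ar p).-tuple C}.

(* terms / atoms over the k global variables x_0..x_{k-1} of a rule *)
Definition term (k : nat) : Type := ('I_k + C)%type.
Definition atom (k : nat) : Type := {p : Pr & (ar p).-tuple (term k)}.

Record rule := Rule {
  rk : nat;                 (* number of global variables *)
  rw : weight;
  rhead : seq (atom rk);    (* disjunction of atoms (possibly empty) *)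
  rbpos : seq (atom rk);
  rbneg : seq (atom rk)
}.

Definition program := seq rule.

Definition ground_term k (c : k.-tuple C) (t : term k) : C :=
  match t with inl j => tnth c j | inr a => a end.

Definition ground_atom k (c : k.-tuple C) (a : atom k) : gatom :=
  @Tagged Pr (tag a) (fun p => (ar p).-tuple C) (map_tuple (ground_term c) (tagged a)).

Definition ground_rule (r : rule) (c : (rk r).-tuple C) : grule gatom :=
  GRule (map (ground_atom c) (rhead r)) (map (ground_atom c) (rbpos r))
        (map (ground_atom c) (rbneg r)).

Variable Pi : program.

Definition rule_of (i : 'I_(size Pi)) : rule := tnth (in_tuple Pi) i.

(* ground instances (i, c) of Pi: the elements of Gr(Pi) *)
Definition ginst : finType := {i : 'I_(size Pi) & (rk (rule_of i)).-tuple C}.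

Definition ginst_weight (g : ginst) : weight := rw (rule_of (tag g)).
Definition ginst_rule (g : ginst) : grule gatom := ground_rule (tagged g).

Definition Gr : seq (weight * grule gatom) :=
  [seq (ginst_weight g, ginst_rule g) | g <- enum ginst].

Definition SM : {set {set gatom}} :=
  [set I | stable [seq wr.2 | wr <- Gr & sat_rule I wr.2] I].

Definition Wpnt (a : R) (I : {set gatom}) : R :=
  if I \in SM then
    exp (- sumR [seq wval a wr.1 | wr <- Gr & ~~ sat_rule I wr.2])
  else 0%R.

Definition Wstd (a : R) (I : {set gatom}) : R :=
  if I \in SM then exp (sumR [seq wval a wr.1 | wr <- Gr & sat_rule I wr.2])
  else 0%R.

Definition Zstd (a : R) : R := sumR [seq Wstd a J | J <- enum {set gatom} & J \in SM].

Definition lim_infty (f : R -> R) (l : R) : Prop :=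
  forall eps : R, (0 < eps)%R ->
    exists M : R, forall a : R, (M < a)%R -> (Rabs (f a - l) < eps)%R.

Definition prob (I : {set gatom}) (p : R) : Prop :=
  lim_infty (fun a => Wstd a I / Zstd a)%R p.

Definition most_probable (I : {set gatom}) : Prop :=
  I \in SM /\ exists p, prob I p /\
    forall (J : {set gatom}) (q : R), prob J q -> (q <= p)%R.

(* atoms of the translation: original atoms, plus the fresh atoms
   unsat(i, w_i, c), one for each ground instance (i, c) *)
Definition tatom : finType := (gatom + ginst)%type.

Definition tr_inst (g : ginst) : seq (grule tatom) :=
  let r := ginst_rule g in
  [:: (* unsat(i,w_i,c) <- Body_i(c), not Head_i(c) *)
      GRule [:: inr g] (map inl (gpos r)) (map inl (gneg r) ++ map inl (ghead r));
      (* Head_i(c) <- Body_i(c), not unsat(i,w_i,c) *)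
      GRule (map inl (ghead r)) (map inl (gpos r)) (map inl (gneg r) ++ [:: inr g]) ].

Definition tr_rules : seq (grule tatom) := flatten [seq tr_inst g | g <- enum ginst].

(* :~ unsat(i,w_i,c). [w'_i@l, i, c] *)
Definition tr_wc (g : ginst) : wconstr tatom :=
  match ginst_weight g with
  | Hard => WC [:: inr g] [::] 1%R 1
  | Soft w => WC [:: inr g] [::] w 0
  end.

Definition tr_weak : seq (wconstr tatom) := [seq tr_wc g | g <- enum ginst].

Definition phi (I : {set gatom}) : {set tatom} :=
  [set x : tatom | match x with
                   | inl a => a \in I
                   | inr g => ~~ sat_rule I (ginst_rule g)
                   end].

Definition unsat_sum (a : R) (J : {set tatom}) : R :=
  sumR [seq wval a (ginst_weight g) | g <- enum ginst & inr g \in J].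

End LPMLN.

(* Write h(I) for the number of ground hard rules violated by I and s(I) for
   the sum of the weights of the violated soft rules.  In a stable model of the
   translation, [unsat(i,c)] holds exactly when the instance (i,c) is violated by
   the original atoms: the first translated rule derives it, and minimality
   forbids it otherwise.  The second translated rule is then the original rule
   guarded by [not unsat], so on original atoms the reduct of the translation is
   the reduct of the rules satisfied by I; hence phi and the projection onto the
   original atoms are inverse bijections between the two kinds of stable models.
   The weak constraints put h at level 1 and s at level 0, so the optimal stable
   models are the lexicographic minima of (h, s).  Finally W(I) is proportional
   to exp (- (alpha h(I) + s(I))); as alpha tends to infinity, P(I) tends to
   exp (- s(I)) / Z when h(I) is minimal and to 0 otherwise, so the most
   probable stable models are the same lexicographic minima. *)

From Stdlib Require Import Reals Lra.
From Coquelicot Require Import Coquelicot.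
From mathcomp Require Import all_boot.

Set Implicit Arguments.
Unset Strict Implicit.
Unset Printing Implicit Defensive.

Section ReductModels.
Variable T : finType.
Implicit Types (I J K : {set T}) (r : grule T) (P : seq (grule T)).

Definition sat_pos J r := all (fun a => a \in J) (gpos r).
Definition sat_neg J r := all (fun a => a \notin J) (gneg r).
Definition sat_head J r := has (fun a => a \in J) (ghead r).

Lemma sat_ruleE I r : sat_rule I r = sat_pos I r && sat_neg I r ==> sat_head I r.
Proof. by []. Qed.

Lemma is_model_reductE P K J :
  is_model (reduct P K) J = all (fun r => sat_neg K r ==> sat_pos J r ==> sat_head J r) P.
Proof.
rewrite /is_model /reduct all_map all_filter; apply: eq_all => r /=.
by rewrite /sat_rule /sat_body /= andbT.
Qed.

Lemma sat_pos_subset I J r : I \subset J -> sat_pos I r -> sat_pos J r.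
Proof. by move=> /subsetP sIJ /allP Ir; apply/allP => a /Ir /sIJ. Qed.

Lemma all_enumP (p : pred T) : reflect (forall x, p x) (all p (enum T)).
Proof.
apply: (iffP allP) => [p_enum x | p_all x _]; last exact: p_all.
by apply: p_enum; rewrite mem_enum.
Qed.

End ReductModels.

Section Translation.
Variables (C Pr : finType) (ar : Pr -> nat) (Pi : program C ar).

Local Notation gi := (ginst Pi).
Local Notation ta := (tatom Pi).
Local Notation rr := (@ginst_rule C Pr ar Pi).
Implicit Types (I : {set gatom C ar}) (J K : {set ta}).

Definition orig K : {set gatom C ar} := [set a | inl a \in K].

Lemma orig_phi I : orig (phi Pi I) = I.
Proof. by apply/setP => a; rewrite !inE. Qed.

Lemma unsat_phi I g : (inr g \in phi Pi I) = ~~ sat_rule I (rr g).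
Proof. by rewrite inE. Qed.

Lemma phi_inj : {in SM Pi &, injective (phi Pi)}.
Proof. by move=> I I' _ _ eqI; rewrite -(orig_phi I) eqI orig_phi. Qed.

Lemma all_tr_rules (p : pred (grule ta)) :
  all p (tr_rules Pi) = all (fun g => all p (tr_inst g)) (enum gi).
Proof.
rewrite /tr_rules; elim: (enum gi) => // g s IH.
by rewrite map_cons -[flatten (_ :: _)]/(tr_inst g ++ _) all_cat IH.
Qed.

Lemma all_inl_in K s : all (fun x => x \in K) (map inl s) = all (fun a => a \in orig K) s.
Proof. by rewrite all_map; apply: eq_all => a; rewrite /= inE. Qed.

Lemma all_inl_notin K s :
  all (fun x => x \notin K) (map inl s) = all (fun a => a \notin orig K) s.
Proof. by rewrite all_map; apply: eq_all => a; rewrite /= inE. Qed.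

Lemma has_inl_in K s : has (fun x => x \in K) (map inl s) = has (fun a => a \in orig K) s.
Proof. by rewrite has_map; apply: eq_has => a; rewrite /= inE. Qed.

(* What the two translated rules of the instance [g] demand of [J] in the
   reduct with respect to [K]. *)
Definition tr_inst_sat K J g :=
  (sat_neg (orig K) (rr g) && ~~ sat_head (orig K) (rr g) && sat_pos (orig J) (rr g)
     ==> (inr g \in J)) &&
  (sat_neg (orig K) (rr g) && (inr g \notin K) && sat_pos (orig J) (rr g)
     ==> sat_head (orig J) (rr g)).

Lemma tr_reduct_modelP K J :
  is_model (reduct (tr_rules Pi) K) J <-> forall g, tr_inst_sat K J g.
Proof.
rewrite is_model_reductE all_tr_rules.
suff tr_instE g :
    all (fun r => sat_neg K r ==> sat_pos J r ==> sat_head J r) (tr_inst g) = tr_inst_sat K J g.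
  by split=> [/all_enumP mJ g | mJ]; [rewrite -tr_instE | apply/all_enumP => g; rewrite tr_instE].
rewrite /tr_inst /tr_inst_sat; move: (rr g) => r.
rewrite /= /sat_neg /sat_pos /sat_head /= !all_cat !all_inl_in !all_inl_notin !has_inl_in.
rewrite /= !andbT orbF -all_predC.
case: (all (fun a => a \notin orig K) (gneg r)); case: (all [predC orig K] (ghead r));
  case: (all (fun a => a \in orig J) (gpos r)); case: (has (fun a => a \in orig J) (ghead r));
  by case: (_ \in J); case: (_ \in K).
Qed.

Lemma Gr_map_filter (X : Type) (f : weight -> grule (gatom C ar) -> X) p :
  [seq f wr.1 wr.2 | wr <- Gr Pi & p wr.2] =
  [seq f (ginst_weight g) (rr g) | g <- enum gi & p (rr g)].
Proof. by rewrite /Gr filter_map -map_comp. Qed.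

Lemma SM_reduct_modelP I (K J : {set gatom C ar}) :
  is_model (reduct [seq wr.2 | wr <- Gr Pi & sat_rule I wr.2] K) J <->
  forall g, sat_rule I (rr g) -> sat_neg K (rr g) -> sat_pos J (rr g) -> sat_head J (rr g).
Proof.
rewrite (Gr_map_filter (fun _ r => r) (sat_rule I)) is_model_reductE all_map all_filter.
split=> [/all_enumP mJ g Ig nK pJ | mJ]; first by move: (mJ g); rewrite /= Ig nK pJ.
by apply/all_enumP => g /=; apply/implyP => Ig; apply/implyP => nK; apply/implyP; apply: mJ.
Qed.

Lemma phi_stable I : I \in SM Pi -> stable (tr_rules Pi) (phi Pi I).
Proof.
rewrite inE => /andP [_ /forallP I_min].
apply/andP; split.
  apply/tr_reduct_modelP => g; rewrite /tr_inst_sat !orig_phi unsat_phi negbK sat_ruleE.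
  by case: (sat_pos _ _); case: (sat_neg _ _); case: (sat_head _ _).
apply/forallP => J; apply/implyP => ltJ; apply/negP => /tr_reduct_modelP mJ.
have /properP [leJ [x xI xJ]] := ltJ.
have sub_origJ : orig J \subset I.
  by apply/subsetP => a; rewrite inE => /(subsetP leJ); rewrite inE.
have [eqJ | neJ] := eqVneq (orig J) I.
  case: x xI xJ => [a | g]; first by rewrite inE -eqJ inE => ->.
  rewrite unsat_phi sat_ruleE negb_imply => /andP [/andP [posI negI] headI] /negP; apply.
  by move: (mJ g); rewrite /tr_inst_sat orig_phi eqJ posI negI headI => /andP [].
have /implyP/(_ _)/negP := I_min (orig J); apply; first by rewrite properEneq neJ.
apply/SM_reduct_modelP => g Ig negI posJ.
by move: (mJ g); rewrite /tr_inst_sat orig_phi unsat_phi Ig negI posJ andbT => /andP [].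
Qed.

Lemma tr_stable_phi_orig J : stable (tr_rules Pi) J -> phi Pi (orig J) = J.
Proof.
move=> /andP [mJ /forallP J_min]; have /tr_reduct_modelP mJg := mJ.
apply/setP => [[a | g]]; first by rewrite !inE.
rewrite unsat_phi; apply/idP/idP.
  rewrite sat_ruleE negb_imply => /andP [/andP [posJ negJ] headJ].
  by move: (mJg g); rewrite /tr_inst_sat posJ negJ headJ => /andP [].
(* If the instance were satisfied, removing [unsat g] would leave a model. *)
move=> gJ; apply/negP => satg.
have /implyP/(_ _)/negP := J_min (J :\ inr g); apply; first by rewrite properD1.
have orig_J1 : orig (J :\ inr g) = orig J by apply/setP => a; rewrite !inE.
apply/tr_reduct_modelP => g'; move: (mJg g'); rewrite /tr_inst_sat orig_J1.
have [-> | neg] := eqVneq g' g.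
  move: satg; rewrite sat_ruleE.
  by case: (sat_pos _ _); case: (sat_neg _ _); case: (sat_head _ _); rewrite /= ?andbF ?gJ.
by rewrite !inE (inj_eq (@inr_inj _ _)) neg.
Qed.

Lemma tr_stable_orig_SM J : stable (tr_rules Pi) J -> orig J \in SM Pi.
Proof.
move=> stJ; have /andP [mJ /forallP J_min] := stJ; have eqJ := tr_stable_phi_orig stJ.
rewrite inE; apply/andP; split.
  apply/SM_reduct_modelP => g; rewrite sat_ruleE => /implyP Jg negJ posJ.
  by apply: Jg; rewrite posJ.
apply/forallP => I1; apply/implyP => ltI1; apply/negP => /SM_reduct_modelP mI1.
have /properP [leI1 [a aJ aI1]] := ltI1.
pose J1 := [set x : ta | if x is inl b then b \in I1 else x \in J].
have orig_J1 : orig J1 = I1 by apply/setP => b; rewrite !inE.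
have /implyP/(_ _)/negP := J_min J1; apply.
  apply/properP; split; last by exists (inl a); rewrite !inE in aJ *.
  by apply/subsetP => -[b | g]; rewrite inE // => /(subsetP leI1); rewrite inE.
apply/tr_reduct_modelP => g; rewrite /tr_inst_sat orig_J1; apply/andP; split.
  apply/implyP => /andP [/andP [negJ headJ] posI1]; rewrite inE -eqJ unsat_phi sat_ruleE.
  by rewrite (sat_pos_subset leI1 posI1) negJ (negbTE headJ).
apply/implyP => /andP [/andP [negJ unsatJ] posI1].
by apply: mI1 => //; move: unsatJ; rewrite -{1}eqJ unsat_phi negbK.
Qed.

Lemma tr_stable_phi_surj J : stable (tr_rules Pi) J -> exists2 I, I \in SM Pi & phi Pi I = J.
Proof. by move=> stJ; exists (orig J); [apply: tr_stable_orig_SM | apply: tr_stable_phi_orig]. Qed.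

End Translation.

Local Open Scope R_scope.

Definition is_hard (w : weight) : bool := if w is Hard then true else false.
Definition soft_val (w : weight) : R := if w is Soft r then r else 0.

Lemma INR_addb (b : bool) n : INR (b + n) = (if b then 1 else 0) + INR n.
Proof. by case: b; rewrite ?add0n ?add1n ?S_INR /=; ring. Qed.

Lemma sumR_filterC (X : Type) (f : X -> R) (p : pred X) s :
  sumR [seq f x | x <- s & p x] + sumR [seq f x | x <- s & ~~ p x] = sumR [seq f x | x <- s].
Proof. by elim: s => [|x s IH] /=; [ring | case: (p x) => /=; rewrite -IH; ring]. Qed.

Lemma sumR_scale (X : Type) (f : X -> R) k s :
  sumR [seq k * f x | x <- s] = k * sumR [seq f x | x <- s].
Proof. by elim: s => [|x s IH] /=; [ring | rewrite IH; ring]. Qed.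

Lemma sumR_ge0 (X : eqType) (f : X -> R) s :
  (forall x, x \in s -> 0 <= f x) -> 0 <= sumR [seq f x | x <- s].
Proof.
elim: s => [|y s IH] f_ge0 /=; first lra.
have : 0 <= sumR [seq f x | x <- s] by apply: IH => z zs; apply: f_ge0; rewrite inE zs orbT.
have := f_ge0 y (mem_head y s); lra.
Qed.

Lemma sumR_ge_elem (X : eqType) (f : X -> R) s x0 :
  (forall x, x \in s -> 0 <= f x) -> x0 \in s -> f x0 <= sumR [seq f x | x <- s].
Proof.
elim: s => [|y s IH] //= f_ge0; have fs_ge0 z : z \in s -> 0 <= f z.
  by move=> zs; apply: f_ge0; rewrite inE zs orbT.
have := f_ge0 y (mem_head y s); rewrite inE => fy_ge0 /orP [/eqP -> | x0s].
  by have := sumR_ge0 fs_ge0; lra.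
by have := IH fs_ge0 x0s; lra.
Qed.

Lemma sumR_wval (X : Type) (w : X -> weight) (p : pred X) a s :
  sumR [seq wval a (w x) | x <- s & p x] =
  a * INR (count (fun x => is_hard (w x) && p x) s) +
  sumR [seq soft_val (w x) | x <- s & ~~ is_hard (w x) && p x].
Proof.
elim: s => [|x s IH] /=; first ring.
by rewrite INR_addb; case: (p x) => /=; case w_x: (w x) => [r|] /=; rewrite ?w_x /= IH; ring.
Qed.

Lemma exp_le_exp x y : exp x <= exp y <-> x <= y.
Proof.
split=> [le_exp | le_xy]; first by apply: Rnot_lt_le => /exp_increasing; lra.
by case: (Rle_lt_or_eq_dec x y le_xy) => [/exp_increasing | ->]; lra.
Qed.

Lemma lim_inftyP f l : lim_infty f l <-> is_lim f p_infty l.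
Proof.
rewrite -is_lim_spec; split=> [lim_f eps | lim_f eps eps_gt0]; first exact: lim_f (cond_pos eps).
exact: (lim_f (mkposreal eps eps_gt0)).
Qed.

Lemma lim_infty_unique f p q : lim_infty f p -> lim_infty f q -> p = q.
Proof.
move=> /lim_inftyP/is_lim_unique limp /lim_inftyP/is_lim_unique limq.
by rewrite limp in limq; case: limq.
Qed.

Lemma is_lim_exp_affine c d :
  0 < c -> is_lim (fun a => exp (- (a * c + d))) p_infty 0.
Proof.
move=> c_gt0; apply/lim_inftyP => eps eps_gt0; exists ((- ln eps - d) / c) => a lt_a.
rewrite Rminus_0_r Rabs_pos_eq; last exact/Rlt_le/exp_pos.
rewrite -(exp_ln eps eps_gt0); apply: exp_increasing.
have : (- ln eps - d) / c * c < a * c by apply: Rmult_lt_compat_r.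
have -> : (- ln eps - d) / c * c = - ln eps - d by field; lra.
lra.
Qed.

Lemma is_lim_sumR (X : eqType) (F : X -> R -> R) (L : X -> R) s :
  (forall x, x \in s -> is_lim (F x) p_infty (L x)) ->
  is_lim (fun a => sumR [seq F x a | x <- s]) p_infty (sumR [seq L x | x <- s]).
Proof.
elim: s => [|x s IH] limF /=; first exact: is_lim_const.
apply: (is_lim_plus' (F x)); first exact/limF/mem_head.
by apply: IH => z zs; apply/limF/mem_behead.
Qed.

Section Penalties.
Variables (C Pr : finType) (ar : Pr -> nat) (Pi : program C ar).

Local Notation gi := (ginst Pi).
Local Notation ta := (tatom Pi).
Local Notation rr := (@ginst_rule C Pr ar Pi).
Local Notation wg := (@ginst_weight C Pr ar Pi).
Implicit Types (I : {set gatom C ar}) (K : {set ta}).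

Definition unsat_hard K : nat := count (fun g => is_hard (wg g) && (inr g \in K)) (enum gi).
Definition unsat_soft K : R :=
  sumR [seq soft_val (wg g) | g <- enum gi & ~~ is_hard (wg g) && (inr g \in K)].

Lemma unsat_sumE a K : unsat_sum a K = a * INR (unsat_hard K) + unsat_soft K.
Proof. exact: sumR_wval. Qed.

Lemma Wpnt_phi I a : I \in SM Pi -> Wpnt Pi a I = exp (- unsat_sum a (phi Pi I)).
Proof.
move=> SMI; rewrite /Wpnt SMI /unsat_sum.
rewrite (Gr_map_filter Pi (fun w _ => wval a w) (fun r => ~~ sat_rule I r)).
by under [in RHS]eq_filter do rewrite unsat_phi.
Qed.

Lemma tr_wc_active K l g :
  (wlvl (tr_wc g) == l) && wc_sat K (tr_wc g) =
  (if is_hard (wg g) then l == 1%N else l == 0%N) && (inr g \in K).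
Proof. by rewrite /tr_wc /wc_sat; case: (wg g) => [r|] /=; rewrite !andbT eq_sym. Qed.

Lemma tr_wc_weight g : wwt (tr_wc g) = if is_hard (wg g) then 1 else soft_val (wg g).
Proof. by rewrite /tr_wc; case: (wg g). Qed.

Lemma penalty_tr_weak K l :
  penalty (tr_weak Pi) K l =
  if l == 0%N then unsat_soft K else if l == 1%N then INR (unsat_hard K) else 0.
Proof.
rewrite /penalty /tr_weak /unsat_soft /unsat_hard; elim: (enum gi) => [|g s IH].
  by case: l => [|[|l]].
rewrite map_cons /= INR_addb tr_wc_active; have := tr_wc_weight g.
by case: (is_hard (wg g)) => w_g; case: (inr g \in K);
  case: l IH => [|[|l]] /= ->; rewrite ?w_g; ring.
Qed.

Definition hard_viol I := unsat_hard (phi Pi I).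
Definition soft_viol I := unsat_soft (phi Pi I).

Definition lex_dominated I I' :=
  (hard_viol I' < hard_viol I)%N \/ (hard_viol I' = hard_viol I /\ soft_viol I' < soft_viol I).

Lemma dominated_phiE I I' :
  dominated (tr_weak Pi) (phi Pi I) (phi Pi I') <-> lex_dominated I I'.
Proof.
rewrite /lex_dominated /hard_viol /soft_viol; split.
  case=> [[|[|l]] [lt_l eq_above]]; rewrite !penalty_tr_weak /= in lt_l.
  - by right; split=> //; apply: INR_eq; move: (eq_above 1%N isT); rewrite !penalty_tr_weak.
  - by left; apply/ltP/INR_lt.
  - lra.
case=> [lt_hard | [eq_hard lt_soft]].
  exists 1%N; rewrite !penalty_tr_weak; split; first exact/lt_INR/ltP.
  by case=> [|[|k]] //; rewrite !penalty_tr_weak.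
exists 0%N; rewrite !penalty_tr_weak; split=> //.
by case=> [|[|k]] // _; rewrite !penalty_tr_weak /= ?eq_hard.
Qed.

Lemma optimal_phiE I : I \in SM Pi ->
  optimal (tr_rules Pi) (tr_weak Pi) (phi Pi I) <->
  ~ exists2 I', I' \in SM Pi & lex_dominated I I'.
Proof.
move=> SMI; split=> [[_ no_dom] [I' SMI' domI'] | no_dom].
  by apply: no_dom; exists (phi Pi I'); split; [apply: phi_stable | apply/dominated_phiE].
split=> [|[J [stJ domJ]]]; first exact: phi_stable.
have [I' SMI' eqJ] := tr_stable_phi_surj stJ; rewrite -eqJ in domJ.
by apply: no_dom; exists I'; last exact/dominated_phiE.
Qed.

Lemma Wstd_SM a I : Wstd Pi a I =
  if I \in SM Pi then
    exp (sumR [seq wval a (wg g) | g <- enum gi] - (a * INR (hard_viol I) + soft_viol I))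
  else 0.
Proof.
rewrite /Wstd; case: (I \in SM Pi) => //; congr exp.
rewrite (Gr_map_filter Pi (fun w _ => wval a w) (sat_rule I)).
rewrite /hard_viol /soft_viol -unsat_sumE /unsat_sum.
under [in RHS]eq_filter do rewrite unsat_phi.
by have := sumR_filterC (fun g => wval a (wg g)) (fun g => sat_rule I (rr g)) (enum gi); lra.
Qed.

End Penalties.

Section Limits.
Variables (C Pr : finType) (ar : Pr -> nat) (Pi : program C ar).
Variable I0 : {set gatom C ar}.
Hypothesis SM_I0 : I0 \in SM Pi.
Hypothesis I0_min : forall J, J \in SM Pi -> (hard_viol Pi I0 <= hard_viol Pi J)%N.

Local Notation gi := (ginst Pi).
Local Notation wg := (@ginst_weight C Pr ar Pi).
Local Notation m := (hard_viol Pi I0).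
Local Notation SMs := [seq J <- enum {set gatom C ar} | J \in SM Pi].
Implicit Types I J : {set gatom C ar}.

(* [W_Pi(J)] divided by the factor [exp (sum of all weights - a m)], which is
   common to all stable models. *)
Definition wrel J a := exp (- (a * (INR (hard_viol Pi J) - INR m) + soft_viol Pi J)).
Definition wlim J := if hard_viol Pi J == m then exp (- soft_viol Pi J) else 0.
Definition Zrel a := sumR [seq wrel J a | J <- SMs].
Definition Zlim := sumR [seq wlim J | J <- SMs].
Definition plim I := if I \in SM Pi then wlim I / Zlim else 0.

Lemma I0_in_SMs : I0 \in SMs.
Proof. by rewrite mem_filter SM_I0 mem_enum. Qed.

Lemma wlim_ge0 J : 0 <= wlim J.
Proof. by rewrite /wlim; case: (_ == _); [apply/Rlt_le/exp_pos | apply: Rle_refl]. Qed.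

Lemma Zlim_gt0 : 0 < Zlim.
Proof.
have : wlim I0 <= Zlim by apply: sumR_ge_elem I0_in_SMs => J _; apply: wlim_ge0.
by rewrite /wlim eqxx; have := exp_pos (- soft_viol Pi I0); lra.
Qed.

Lemma Zrel_gt0 a : 0 < Zrel a.
Proof.
have : wrel I0 a <= Zrel a by apply: sumR_ge_elem I0_in_SMs => J _; apply/Rlt_le/exp_pos.
by have := exp_pos (- (a * (INR m - INR m) + soft_viol Pi I0)); rewrite /wrel; lra.
Qed.

Lemma Wstd_ratio I a : I \in SM Pi -> Wstd Pi a I / Zstd Pi a = wrel I a / Zrel a.
Proof.
move=> SMI; set k := exp (sumR [seq wval a (wg g) | g <- enum gi] - a * INR m).
have Wstd_k J : J \in SM Pi -> Wstd Pi a J = k * wrel J a.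
  by move=> SMJ; rewrite Wstd_SM SMJ /k /wrel -exp_plus; congr exp; ring.
have -> : Zstd Pi a = k * Zrel a.
  rewrite /Zstd /Zrel -sumR_scale; congr sumR; apply/eq_in_map => J.
  by rewrite mem_filter => /andP [SMJ _]; apply: Wstd_k.
have k_gt0 : 0 < k by apply: exp_pos.
by rewrite Wstd_k //; have := Zrel_gt0 a => Z_gt0; field; lra.
Qed.

Lemma is_lim_wrel J : J \in SM Pi -> is_lim (wrel J) p_infty (wlim J).
Proof.
move=> SMJ; rewrite /wlim; case: eqP => [eq_m | ne_m].
  apply: (is_lim_ext (fun _ => exp (- soft_viol Pi J))); last exact: is_lim_const.
  by move=> a; rewrite /wrel eq_m; congr exp; ring.
have lt_m : (m < hard_viol Pi J)%N by rewrite ltn_neqAle I0_min // andbT; apply/eqP => /esym.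
have gap_gt0 : 0 < INR (hard_viol Pi J) - INR m by have := lt_INR _ _ (ltP lt_m); lra.
exact: is_lim_ext (is_lim_exp_affine (soft_viol Pi J) gap_gt0).
Qed.

Lemma prob_plim I : prob Pi I (plim I).
Proof.
apply/lim_inftyP; rewrite /plim; case SMI: (I \in SM Pi); last first.
  apply: (is_lim_ext (fun _ => 0)); last exact: is_lim_const.
  by move=> a; rewrite Wstd_SM SMI /Rdiv Rmult_0_l.
apply: (is_lim_ext (fun a => wrel I a / Zrel a)); first by move=> a; rewrite Wstd_ratio.
have limZ : is_lim Zrel p_infty Zlim.
  by apply: is_lim_sumR => J; rewrite mem_filter => /andP [SMJ _]; apply: is_lim_wrel.
apply: (is_lim_div _ _ _ _ _ (is_lim_wrel SMI) limZ) => // -[] Z0.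
by have := Zlim_gt0; lra.
Qed.

Lemma plim_min J : J \in SM Pi -> hard_viol Pi J = m -> plim J = exp (- soft_viol Pi J) / Zlim.
Proof. by move=> SMJ eq_m; rewrite /plim SMJ /wlim eq_m eqxx. Qed.

Lemma plim_not_min J : ~~ ((J \in SM Pi) && (hard_viol Pi J == m)) -> plim J = 0.
Proof.
rewrite /plim /wlim; case: (J \in SM Pi) => //= /negbTE ->.
by rewrite /Rdiv Rmult_0_l.
Qed.

Lemma plim_min_gt0 J : J \in SM Pi -> hard_viol Pi J = m -> 0 < plim J.
Proof.
move=> SMJ eq_m; rewrite plim_min //.
exact: Rdiv_lt_0_compat (exp_pos _) Zlim_gt0.
Qed.

Lemma plim_min_le I J : I \in SM Pi -> hard_viol Pi I = m -> J \in SM Pi -> hard_viol Pi J = m ->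
  plim J <= plim I <-> soft_viol Pi I <= soft_viol Pi J.
Proof.
move=> SMI eqI SMJ eqJ; rewrite !plim_min //; have Z_gt0 := Zlim_gt0.
split=> [le_p | le_soft].
  suff : - soft_viol Pi J <= - soft_viol Pi I by lra.
  by apply/exp_le_exp; apply: (Rmult_le_reg_r (/ Zlim)); first exact: Rinv_0_lt_compat.
by apply: Rmult_le_compat_r; [apply/Rlt_le/Rinv_0_lt_compat | apply/exp_le_exp; lra].
Qed.

Definition lex_optimal I := [/\ I \in SM Pi, hard_viol Pi I = m &
  forall J, J \in SM Pi -> hard_viol Pi J = m -> soft_viol Pi I <= soft_viol Pi J].

Lemma most_probable_lex_optimal I : most_probable Pi I <-> lex_optimal I.
Proof.
split=> [[SMI [p [probI p_max]]] | [SMI eqI soft_min]].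
  have eq_p : p = plim I := lim_infty_unique probI (prob_plim I); subst p.
  have eqI : hard_viol Pi I = m.
    have := p_max _ _ (prob_plim I0); have := plim_min_gt0 SM_I0 erefl.
    have [/eqP // | ne_m] := boolP (hard_viol Pi I == m).
    by rewrite (@plim_not_min I) ?SMI ?(negbTE ne_m) //; lra.
  by split=> // J SMJ eqJ; apply/(plim_min_le SMI eqI SMJ eqJ)/p_max/prob_plim.
split=> //; exists (plim I); split=> [|J q probJ]; first exact: prob_plim.
rewrite (lim_infty_unique probJ (prob_plim J)).
have [/andP [SMJ /eqP eqJ] | off_min] := boolP ((J \in SM Pi) && (hard_viol Pi J == m)).
  exact/(plim_min_le SMI eqI SMJ eqJ)/soft_min.
by rewrite plim_not_min //; apply/Rlt_le/plim_min_gt0.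
Qed.

Lemma undominated_lex_optimal I : I \in SM Pi ->
  (~ exists2 I', I' \in SM Pi & lex_dominated Pi I I') <-> lex_optimal I.
Proof.
move=> SMI; split=> [undom | [_ eqI soft_min] [I' SMI' [lt_hard | [eq_hard lt_soft]]]].
- have eqI : hard_viol Pi I = m.
    apply/eqP; rewrite eqn_leq I0_min // andbT leqNgt; apply/negP => lt_m.
    by apply: undom; exists I0 => //; left.
  split=> // J SMJ eqJ; apply: Rnot_lt_le => lt_soft.
  by apply: undom; exists J => //; right; rewrite eqJ eqI.
- by have := I0_min SMI'; rewrite leqNgt -eqI lt_hard.
- by have := soft_min I' SMI'; rewrite eq_hard eqI => /(_ erefl); lra.
Qed.

End Limits.

Lemma exists_hard_viol_min (C Pr : finType) (ar : Pr -> nat) (Pi : program C ar) I :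
  I \in SM Pi ->
  exists2 I0, I0 \in SM Pi & forall J, J \in SM Pi -> (hard_viol Pi I0 <= hard_viol Pi J)%N.
Proof. by move=> SMI; case: (arg_minnP (hard_viol Pi) SMI) => I0; exists I0. Qed.

Theorem theorem3 (C Pr : finType) (ar : Pr -> nat) (Pi : program C ar) :
  (forall I, I \in SM Pi -> stable (tr_rules Pi) (phi Pi I)) /\
  {in SM Pi &, injective (phi Pi)} /\
  (forall J, stable (tr_rules Pi) J -> exists2 I, I \in SM Pi & phi Pi I = J) /\
  (forall I, I \in SM Pi -> forall a : R,
     Wpnt Pi a I = exp (- unsat_sum a (phi Pi I))) /\
  (forall I, most_probable Pi I -> optimal (tr_rules Pi) (tr_weak Pi) (phi Pi I)) /\
  (forall J, optimal (tr_rules Pi) (tr_weak Pi) J ->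
     exists2 I, most_probable Pi I & phi Pi I = J).
Proof.
have optimal_most_probable I : I \in SM Pi ->
    optimal (tr_rules Pi) (tr_weak Pi) (phi Pi I) <-> most_probable Pi I.
  move=> SMI; have [I0 SM_I0 I0_min] := exists_hard_viol_min SMI.
  rewrite (optimal_phiE SMI) (undominated_lex_optimal SM_I0 I0_min SMI).
  by rewrite (most_probable_lex_optimal SM_I0 I0_min).
split; first exact: phi_stable.
split; first exact: phi_inj.
split; first exact: tr_stable_phi_surj.
split; first by move=> I SMI a; apply: Wpnt_phi.
split=> [I mpI | J optJ]; first by apply/optimal_most_probable => //; case: mpI.
have [I SMI eqJ] := tr_stable_phi_surj optJ.1.
by exists I => //; apply/optimal_most_probable; rewrite // eqJ.
Qed.
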